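(* Let $\mathcal R$ be a species of tree on $T_0=\{1,\dots,n\}$ and $A=\sum_{T\in\mathcal R}\lambda(T)A(T)$ with $\lambda(T)\in\mathbf Q$. Then $A$ is diagonalizable and its eigenvalues are $0$ and the numbers $$\sum_{T\in\mathcal R,\ T\supset T_1}\lambda(T)\,n(T),\qquad T_1\in\mathcal R.$$
   Context: A species of tree is a family $\mathcal R$ of subsets of $T_0$ containing $T_0$, each of cardinality $\ge 2$, any two of which are either disjoint or nested. $n(T)$ is the cardinality of $T$. For $T$ with $n(T)\ge2$, $A(T)=(\alpha_{i,j})$ is the $n\times n$ matrix with $\alpha_{i,j}=-1$ if $i\ne j$, $\{i,j\}\subset T$, $\alpha_{i,i}=n(T)-1$ if $i\in T$, and $0$ otherwise. *)

From mathcomp Require Import all_boot all_order all_algebra.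
Set Implicit Arguments. Unset Strict Implicit. Unset Printing Implicit Defensive.
Import GRing.Theory Num.Theory.
Local Open Scope ring_scope.

(* T_0 = {1,...,n} is modelled by the finite type 'I_n = {0,...,n-1}. *)

Definition species_of_tree (n : nat) (R : {set {set 'I_n}}) : Prop :=
  [/\ [set: 'I_n] \in R,
      (forall T, T \in R -> (2 <= #|T|)%N) &
      (forall T U, T \in R -> U \in R ->
         [disjoint T & U] \/ T \subset U \/ U \subset T)].

Definition AT (n : nat) (T : {set 'I_n}) : 'M[rat]_n :=
  \matrix_(i, j)
    if i == j then (if i \in T then (#|T|%:R - 1) else 0)
    else (if (i \in T) && (j \in T) then -1 else 0).

Definition Asum (n : nat) (R : {set {set 'I_n}}) (lambda : {set 'I_n} -> rat)
  : 'M[rat]_n := \sum_(T in R) lambda T *: AT T.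

From mathcomp Require Import all_boot all_order all_algebra.
From mathcomp Require Import ring.
Set Implicit Arguments. Unset Strict Implicit. Unset Printing Implicit Defensive.
Import GRing.Theory Num.Theory.
Local Open Scope ring_scope.

(* Nested or disjoint supports make the matrices A(T), T in R, commute:
   A(T) A(U) = n(U) A(T) when T is contained in U, and 0 when T and U are
   disjoint.  Since moreover A(T)^2 = n(T) A(T), they are simultaneously
   diagonalizable, hence so is every linear combination A.  If v is an
   eigenvector of A with v A(T) <> 0 for some T in R, take such a T1 of least
   size: w = v A(T1) is killed by each A(T) with T not containing T1 and is
   scaled by n(T) when T contains T1, so its eigenvalue is
   mu T1 = sum_(T >= T1) lambda(T) n(T).  Conversely the all-ones row is in
   the kernel, and if C is a largest member of R strictly inside T1 (or a
   singleton when there is none), every member of R is either above T1 or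
   contained in or disjoint from C, which makes n(T1) 1_C - n(C) 1_T1 an
   eigenvector for mu T1. *)

Section DiagonalizableCombination.
Variable F : fieldType.

Lemma diagonalizable_mulmx_scale m (M : 'M[F]_m) (c : F) :
  c != 0 -> M *m M = c *: M -> diagonalizable M.
Proof.
case: m M => [|m] M c_neq0 MM.
  by exists 1%:M; rewrite ?unitmx1 //; apply/is_diag_mxP => -[].
apply/diagonalizableP; exists [:: 0; c]; first by rewrite /= inE eq_sym c_neq0.
apply: mxminpoly_min.
rewrite !big_cons big_nil mulr1 rmorphM /= !rmorphB /= horner_mx_X !horner_mx_C.
rewrite (raddf0 (@scalar_mx F m.+1)) subr0 mulrBr.
have -> : M * M = M *m M by [].
have -> : M * c%:M = M *m c%:M by [].
by rewrite MM mul_mx_scalar subrr.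
Qed.

Lemma diagonalizable_lin_comb m (I : finType) (P : pred I)
    (A : I -> 'M[F]_m) (l : I -> F) :
  (forall i j, P i -> P j -> comm_mx (A i) (A j)) ->
  (forall i, P i -> diagonalizable (A i)) ->
  diagonalizable (\sum_(i | P i) l i *: A i).
Proof.
move=> commA diagA.
have [Q unitQ /allP QA] : codiagonalizable [seq A i | i <- enum P].
  apply/codiagonalizableP; split.
  - by move=> _ _ /mapP[i + ->] /mapP[j + ->]; rewrite !mem_enum; apply: commA.
  - by move=> _ /mapP[i + ->]; rewrite mem_enum; apply: diagA.
exists Q => //; apply/is_diag_mxP => r s rs.
rewrite /conjmx mulmx_sumr mulmx_suml summxE big1 // => i Pi.
rewrite -scalemxAr -scalemxAl mxE.
by rewrite (is_diag_mxP (QA _ (map_f _ _))) ?mem_enum ?mulr0.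
Qed.
End DiagonalizableCombination.

Section TreeMatrices.
Variable n : nat.
Implicit Types S T U : {set 'I_n}.

Lemma AT_mxE T i j :
  AT T i j = ((i \in T) && (j \in T))%:R * ((i == j)%:R * #|T|%:R - 1).
Proof.
rewrite /AT mxE; case: eqP => [->|_]; rewrite ?andbb;
  by case: (i \in T); case: (j \in T) => /=; ring.
Qed.

Lemma AT_notin T i j : j \notin T -> AT T i j = 0.
Proof. by move/negPf=> jT; rewrite AT_mxE jT andbF mul0r. Qed.

Lemma trmx_AT T : (AT T)^T = AT T.
Proof. by apply/matrixP => i j; rewrite mxE !AT_mxE andbC eq_sym. Qed.

Lemma mulmx_ATE m (M : 'M[rat]_(m, n)) T k j :
  (M *m AT T) k j =
    if j \in T then #|T|%:R * M k j - \sum_(i in T) M k i else 0.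
Proof.
rewrite mxE; case: ifPn => jT; last first.
  by rewrite big1 // => i _; rewrite AT_notin ?mulr0.
rewrite (eq_bigr (fun i => (i == j)%:R * #|T|%:R * M k i - (i \in T)%:R * M k i));
  last by move=> i _; rewrite AT_mxE jT andbT; case: eqP => [->|_]; rewrite ?jT /=; ring.
rewrite sumrB (bigD1 j) //= eqxx mul1r big1 ?addr0 => [|i /negPf->]; last first.
  by rewrite !mul0r.
by rewrite [in RHS]big_mkcond; congr (_ - _); apply: eq_bigr => i _; case: (i \in T) => /=; ring.
Qed.

Lemma sum_AT_row T k : \sum_i AT T k i = 0.
Proof.
have := mulmx_ATE (const_mx 1 : 'rV_n) T 0 k.
rewrite mxE (eq_bigr (fun i => AT T k i)) => [->|i _]; last first.
  by rewrite mxE mul1r -[in LHS]trmx_AT mxE.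
case: ifP => // _; rewrite mxE mulr1 (eq_bigr (fun _ => 1)) => [|i _]; last by rewrite mxE.
by rewrite sumr_const subrr.
Qed.

Lemma sum_AT_row_in T U k :
  T \subset U \/ [disjoint T & U] -> \sum_(i in U) AT T k i = 0.
Proof.
case=> [TU | dTU]; last by rewrite big1 // => i iU; rewrite AT_notin ?(disjointFl dTU iU).
transitivity (\sum_i AT T k i); last exact: sum_AT_row.
rewrite [RHS](bigID (mem U)) /= [X in _ = _ + X]big1 ?addr0 //.
by move=> i iU; rewrite AT_notin //; apply: contra iU; apply: subsetP.
Qed.

Lemma mulmx_AT_sub T U : T \subset U -> AT T *m AT U = #|U|%:R *: AT T.
Proof.
move=> TU; apply/matrixP => k j; rewrite mulmx_ATE sum_AT_row_in ?subr0; last by left.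
rewrite [in RHS]mxE; case: ifPn => // jU; rewrite AT_notin ?mulr0 //.
by apply: contra jU; apply: subsetP.
Qed.

Lemma mulmx_AT_sup T U : T \subset U -> AT U *m AT T = #|U|%:R *: AT T.
Proof.
by move=> TU; rewrite -[AT U]trmx_AT -[AT T]trmx_AT -trmx_mul mulmx_AT_sub // linearZ.
Qed.

Lemma mulmx_AT_disjoint T U : [disjoint T & U] -> AT T *m AT U = 0.
Proof.
move=> dTU; apply/matrixP => k j; rewrite mulmx_ATE sum_AT_row_in ?subr0; last by right.
by rewrite [RHS]mxE; case: ifP => // jU; rewrite AT_notin ?mulr0 ?(disjointFl dTU jU).
Qed.

Definition row_ind S : 'rV[rat]_n := \row_i (i \in S)%:R.

Lemma row_ind_eq0 S : (row_ind S == 0) = (S == set0).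
Proof.
apply/eqP/eqP => [/rowP S0|->]; last by apply/rowP => i; rewrite !mxE inE.
apply/setP => i; move: (S0 i); rewrite !mxE inE => /eqP.
by rewrite pnatr_eq0 eqb0 => /negPf.
Qed.

Lemma mulmx_row_indE S T j : (row_ind S *m AT T) 0 j =
  if j \in T then #|T|%:R * (j \in S)%:R - #|T :&: S|%:R else 0.
Proof.
rewrite mulmx_ATE mxE; congr (if _ then _ - _ else _).
rewrite -sum1_card natr_sum big_mkcond [RHS]big_mkcond /=; apply: eq_bigr => i _.
by rewrite inE mxE; case: (i \in T); case: (i \in S).
Qed.

Lemma mulmx_row_ind_AT0 S T :
  T \subset S \/ [disjoint T & S] -> row_ind S *m AT T = 0.
Proof.
move=> TS; apply/rowP => j; rewrite mulmx_row_indE mxE; case: ifP => // jT.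
case: TS => [TS | dTS]; first by rewrite (setIidPl TS) (subsetP TS _ jT) mulr1 subrr.
by rewrite (disjoint_setI0 dTS) cards0 (disjointFr dTS jT) mulr0 subrr.
Qed.

Lemma mulmx_row_ind_AT S T : S \subset T ->
  row_ind S *m AT T = #|T|%:R *: row_ind S - #|S|%:R *: row_ind T.
Proof.
move=> ST; apply/rowP => j; rewrite mulmx_row_indE (setIidPr ST) !mxE.
case: ifPn => jT; first by rewrite mulr1.
by rewrite (contraNF (subsetP ST j)) // !mulr0 subrr.
Qed.

End TreeMatrices.

Section SpeciesOfTree.
Variables (n : nat) (R : {set {set 'I_n}}) (lambda : {set 'I_n} -> rat).
Hypothesis speciesR : species_of_tree R.
Implicit Types T U C : {set 'I_n}.

Lemma species_nested T U : T \in R -> U \in R ->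
  [disjoint T & U] \/ T \subset U \/ U \subset T.
Proof. by case: speciesR => _ _; apply. Qed.

Lemma species_card_gt1 T : T \in R -> (1 < #|T|)%N.
Proof. by case: speciesR => _ + _; apply. Qed.

Lemma comm_AT T U : T \in R -> U \in R -> comm_mx (AT T) (AT U).
Proof.
move=> TR UR; rewrite /comm_mx; case: (species_nested TR UR) => [dTU | [TU | UT]].
- by rewrite !mulmx_AT_disjoint // disjoint_sym.
- by rewrite mulmx_AT_sub // mulmx_AT_sup.
- by rewrite mulmx_AT_sup // mulmx_AT_sub.
Qed.

Lemma diagonalizable_Asum : diagonalizable (Asum R lambda).
Proof.
apply: diagonalizable_lin_comb => [T U TR UR | T TR]; first exact: comm_AT.
apply: (@diagonalizable_mulmx_scale _ _ _ #|T|%:R); last exact: mulmx_AT_sub.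
by rewrite pnatr_eq0 -lt0n ltnW ?species_card_gt1.
Qed.

Definition mu T1 := \sum_(T in R | T1 \subset T) lambda T * #|T|%:R.

Lemma mulmx_Asum m (v : 'M_(m, n)) :
  v *m Asum R lambda = \sum_(T in R) lambda T *: (v *m AT T).
Proof. by rewrite mulmx_sumr; apply: eq_bigr => T _; rewrite scalemxAr. Qed.

Lemma mulmx_Asum_eigen (w : 'rV_n) T1 :
  (forall T, T \in R -> w *m AT T = if T1 \subset T then #|T|%:R *: w else 0) ->
  w *m Asum R lambda = mu T1 *: w.
Proof.
move=> wAT; rewrite mulmx_Asum /mu big_mkcondr scaler_suml; apply: eq_bigr => T TR.
by rewrite wAT //; case: ifP; rewrite ?scalerA ?scaler0 ?scale0r.
Qed.

Lemma comm_AT_Asum T : T \in R -> comm_mx (AT T) (Asum R lambda).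
Proof.
move=> TR; rewrite /comm_mx mulmx_Asum mulmx_suml; apply: eq_bigr => U UR.
by rewrite -scalemxAl comm_AT.
Qed.

Lemma mulmx_AT_minimal (v : 'rV_n) T1 : T1 \in R ->
    (forall T, T \in R -> T \proper T1 -> v *m AT T = 0) ->
  forall T, T \in R ->
    v *m AT T1 *m AT T = if T1 \subset T then #|T|%:R *: (v *m AT T1) else 0.
Proof.
move=> T1R minT1 T TR; rewrite -mulmxA; case: ifPn => T1T.
  by rewrite mulmx_AT_sub // scalemxAr.
case: (species_nested T1R TR) => [dT1T | [T1T' | TT1]].
- by rewrite mulmx_AT_disjoint // mulmx0.
- by rewrite T1T' in T1T.
by rewrite mulmx_AT_sup // -scalemxAr minT1 ?scaler0 // properE TT1.
Qed.

Lemma eigenvalue_Asum_cases a : eigenvalue (Asum R lambda) a ->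
  a = 0 \/ exists2 T1, T1 \in R & a = mu T1.
Proof.
case/eigenvalueP => v vA v_neq0.
pose S := [set T in R | v *m AT T != 0].
have [S0 | /set0Pn[T0 T0S]] := eqVneq S set0.
  left; suff /eqP : a *: v = 0 by rewrite scaler_eq0 (negbTE v_neq0) orbF => /eqP.
  rewrite -vA mulmx_Asum big1 // => T TR.
  by have := in_set0 T; rewrite -S0 inE TR => /negbFE/eqP ->; rewrite scaler0.
have [T1 T1S minT1] := arg_minnP (fun T => #|T|) T0S.
have : T1 \in S := T1S; rewrite /S inE => /andP[T1R w_neq0]; right; exists T1 => //.
have vAT0 T : T \in R -> T \proper T1 -> v *m AT T = 0.
  move=> TR TT1; apply/eqP; apply: contraTT (proper_card TT1) => vT.
  have TS : T \in S by rewrite /S inE TR.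
  by rewrite -leqNgt minT1.
have := mulmx_Asum_eigen (mulmx_AT_minimal T1R vAT0).
rewrite -mulmxA comm_AT_Asum // mulmxA vA -scalemxAl => /eqP.
by rewrite -subr_eq0 -scalerBl scaler_eq0 subr_eq0 (negbTE w_neq0) orbF => /eqP.
Qed.

Lemma eigenvalue_Asum0 : eigenvalue (Asum R lambda) 0.
Proof.
apply/eigenvalueP; exists (row_ind [set: 'I_n]).
  rewrite scale0r mulmx_Asum big1 // => T _.
  by rewrite mulmx_row_ind_AT0 ?scaler0 //; left; apply: subsetT.
by rewrite row_ind_eq0 -card_gt0 ltnW // species_card_gt1 //; case: speciesR.
Qed.

Lemma exists_separating_subset T1 : T1 \in R -> exists C,
  [/\ C \proper T1, C != set0 &
      forall T, T \in R -> T \proper T1 -> T \subset C \/ [disjoint T & C]].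
Proof.
move=> T1R; pose S := [set T in R | T \proper T1].
have [S0 | /set0Pn[T0 T0S]] := eqVneq S set0.
  have /card_gt0P[x xT1] := ltnW (species_card_gt1 T1R).
  exists [set x]; split.
  - by rewrite properEcard sub1set xT1 cards1 species_card_gt1.
  - by apply/set0Pn; exists x; rewrite set11.
  by move=> T TR TT1; have := in_set0 T; rewrite -S0 inE TR TT1.
have [C CS maxC] := arg_maxnP (fun T => #|T|) T0S.
have : C \in S := CS; rewrite inE => /andP[CR CT1]; exists C; split => //.
  by rewrite -card_gt0 ltnW ?species_card_gt1.
move=> T TR TT1; case: (species_nested TR CR) => [dTC | [TC | CT]].
- by right.
- by left.
have TS : T \in S by rewrite inE TR.
have /eqP <- : C == T by rewrite eqEcard CT; apply: maxC.
by left.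
Qed.

Lemma eigenvalue_Asum_mu T1 : T1 \in R -> eigenvalue (Asum R lambda) (mu T1).
Proof.
move=> T1R; have [C [CT1 C_neq0 sepC]] := exists_separating_subset T1R.
have CsubT1 := proper_sub CT1.
apply/eigenvalueP; exists (#|T1|%:R *: row_ind C - #|C|%:R *: row_ind T1).
  apply: mulmx_Asum_eigen => T TR; rewrite mulmxBl -!scalemxAl; case: ifPn => T1T.
    rewrite !mulmx_row_ind_AT //; last exact: subset_trans T1T.
    by apply/rowP => j; rewrite !mxE; ring.
  suff [-> ->] : row_ind T1 *m AT T = 0 /\ row_ind C *m AT T = 0.
    by rewrite !scaler0 subrr.
  case: (species_nested T1R TR) => [dT1T | [T1T' | TT1]].
  - split; apply: mulmx_row_ind_AT0; right; rewrite disjoint_sym //.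
    exact: disjointWl dT1T.
  - by rewrite T1T' in T1T.
  have TT1' : T \proper T1 by rewrite properE TT1.
  by split; apply: mulmx_row_ind_AT0; [left | apply: sepC].
have /set0Pn[x xC] := C_neq0.
apply/eqP => /rowP/(_ x); rewrite !mxE xC (subsetP CsubT1 _ xC) !mulr1.
by move/eqP; rewrite subr_eq0 eqr_nat eqn_leq leqNgt (proper_card CT1).
Qed.

End SpeciesOfTree.

Theorem mainTheorem8 (n : nat) (R : {set {set 'I_n}})
    (lambda : {set 'I_n} -> rat) :
  species_of_tree R ->
  diagonalizable (Asum R lambda) /\
  (forall a : rat, eigenvalue (Asum R lambda) a <->
     (a = 0 \/ exists2 T1, T1 \in R &
        a = \sum_(T in R | T1 \subset T) lambda T * #|T|%:R)).
Proof.
move=> speciesR; split; first exact: diagonalizable_Asum.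
move=> a; split; first exact: eigenvalue_Asum_cases.
case=> [-> | [T1 T1R ->]]; first exact: eigenvalue_Asum0.
exact: eigenvalue_Asum_mu.
Qed.
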